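(* For every positive integer $n$ and every $r \in [\sqrt{\frac{13}{48}}, \frac{\sqrt{3}}{3})$, we have $N_n(r) \ge \lceil \frac{n}{2} \rceil$.
   Context: For a positive integer $n$, let $\mathcal{P}_n$ denote the family of all sets of $n$ points in the Euclidean plane such that the distance between any two points of the set is at most $1$. For $0 < r \le 1$, let $N_n(r)$ be the largest integer $k$ such that for every $P \in \mathcal{P}_n$ there exists a circle of radius $r$ (i.e. a closed disc of radius $r$) which covers (contains) at least $k$ points of $P$. *)

From Stdlib Require Import Reals List.
Import ListNotations.
Open Scope R_scope.

Definition point : Type := (R * R)%type.

Definition dist2 (p q : point) : R :=
  sqrt ((fst p - fst q) ^ 2 + (snd p - snd q) ^ 2).

Definition is_point_set (n : nat) (P : list point) : Prop :=
  NoDup P /\ length P = n.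

Definition in_family (n : nat) (P : list point) : Prop :=
  is_point_set n P /\ (forall p q, In p P -> In q P -> dist2 p q <= 1).

Definition disc_covers_at_least (c : point) (r : R) (P : list point) (k : nat) : Prop :=
  exists Q : list point,
    NoDup Q /\ (k <= length Q)%nat /\
    (forall q, In q Q -> In q P /\ dist2 c q <= r).

(* "k is admissible for N_n(r)": for every P in P_n there is a closed disc of
   radius r covering at least k points of P.  N_n(r) is the largest admissible
   k, and admissibility is downward closed, so  N_n(r) >= k  <->  N_admissible n r k. *)
Definition N_admissible (n : nat) (r : R) (k : nat) : Prop :=
  forall P : list point, in_family n P ->
    exists c : point, disc_covers_at_least c r P k.

Definition ceil_half (n : nat) : nat := Nat.div (n + 1) 2.

From Stdlib Require Import Reals List Lra Lia Psatz FunctionalExtensionality.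
Open Scope R_scope.

(* For a unit vector u, the projection of P onto u lies in an interval of
   length at most 1 (the diameter of P is at most 1), so P lies in the strip of
   width 1 around the line orthogonal to u through the midpoint m(u) of that
   interval; moreover m(-u) = -m(u).  For three directions u, u', u'' at 120
   degrees, turning them by 60 degrees replaces them by -u'', -u, -u', so
   m(u) + m(u') + m(u'') changes sign and vanishes for some position by the
   intermediate value theorem.  The three mid-lines are then concurrent, and P
   lies in the intersection of the three strips: a regular hexagon of inradius
   1/2.  The line through its centre parallel to two of its sides cuts it into
   two halves, each contained in a disc of radius sqrt (13/48); one of these
   two discs contains at least half of the points. *)

Lemma Rabs_le_between x a : Rabs x <= a -> - a <= x <= a.
Proof.
  intros H. pose proof (Rle_abs x). pose proof (Rle_abs (- x)).
  rewrite Rabs_Ropp in *. lra.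
Qed.

Lemma Rmax_abs_formula a b : Rmax a b = (a + b + Rabs (a - b)) / 2.
Proof.
  unfold Rmax; destruct (Rle_dec a b).
  - rewrite Rabs_left1; lra.
  - rewrite Rabs_right; lra.
Qed.

Lemma continuity_Rmax f g :
  continuity f -> continuity g -> continuity (fun x => Rmax (f x) (g x)).
Proof.
  intros Hf Hg.
  replace (fun x => Rmax (f x) (g x))
    with (fun x => (f x + g x + Rabs (f x - g x)) * / 2)
    by (apply functional_extensionality; intros x; rewrite Rmax_abs_formula; reflexivity).
  apply continuity_mult; [| apply continuity_const; intros ? ?; reflexivity].
  apply continuity_plus; [apply continuity_plus; assumption |].
  apply (continuity_comp _ Rabs); [apply continuity_minus; assumption | exact Rcontinuity_abs].
Qed.

Lemma IVT_opp_values (f : R -> R) a :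
  continuity f -> 0 <= a -> f a = - f 0 -> exists t, f t = 0.
Proof.
  intros Hf Ha Hfa.
  destruct (IVT_cor f 0 a Hf Ha) as [t [_ Ht]].
  - rewrite Hfa. nra.
  - exists t; exact Ht.
Qed.

Definition dot (u z : point) : R := fst u * fst z + snd u * snd z.
Definition opp (u : point) : point := (- fst u, - snd u).
Definition dir (t : R) : point := (cos t, sin t).

Lemma dot_opp u z : dot (opp u) z = - dot u z.
Proof. unfold dot, opp; simpl; ring. Qed.

Lemma opp_involutive u : opp (opp u) = u.
Proof. destruct u as [x y]; unfold opp; simpl; rewrite !Ropp_involutive; reflexivity. Qed.

Lemma dir_unit t : fst (dir t) ^ 2 + snd (dir t) ^ 2 = 1.
Proof. unfold dir; simpl. pose proof (sin2_cos2 t) as H. unfold Rsqr in H. lra. Qed.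

Lemma dir_add_PI t : dir (t + PI) = opp (dir t).
Proof. unfold dir, opp; simpl. rewrite neg_cos, neg_sin. reflexivity. Qed.

Lemma dir_sub_PI t : dir (t - PI) = opp (dir t).
Proof.
  rewrite <- (opp_involutive (dir (t - PI))), <- dir_add_PI.
  f_equal; f_equal; ring.
Qed.

Lemma dir_add_PI2 t : dir (t + PI / 2) = (- sin t, cos t).
Proof. unfold dir. rewrite cos_plus, sin_plus, cos_PI2, sin_PI2. f_equal; ring. Qed.

Lemma dot_sub_le_dist u p q :
  fst u ^ 2 + snd u ^ 2 = 1 -> dot u p - dot u q <= dist2 p q.
Proof.
  intros Hu. unfold dist2, dot.
  set (dx := fst p - fst q); set (dy := snd p - snd q).
  replace (fst u * fst p + snd u * snd p - (fst u * fst q + snd u * snd q))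
    with (fst u * dx + snd u * dy) by (unfold dx, dy; ring).
  eapply Rle_trans; [apply Rle_abs |].
  rewrite <- sqrt_Rsqr_abs. apply sqrt_le_1_alt. unfold Rsqr.
  assert (Lagrange : (fst u * dx + snd u * dy) ^ 2 + (fst u * dy - snd u * dx) ^ 2
                     = (fst u ^ 2 + snd u ^ 2) * (dx ^ 2 + dy ^ 2)) by ring.
  rewrite Hu, Rmult_1_l in Lagrange.
  pose proof (pow2_ge_0 (fst u * dy - snd u * dx)). simpl in *. lra.
Qed.

Section Support.

Variables (p0 : point) (ps : list point).

Definition support (u : point) : R :=
  fold_right (fun z m => Rmax (dot u z) m) (dot u p0) ps.

Lemma support_ub u z : In z (p0 :: ps) -> dot u z <= support u.
Proof.
  unfold support. intros [<- | Hz].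
  - induction ps as [| y l IH]; simpl; [lra |].
    eapply Rle_trans; [exact IH | apply Rmax_r].
  - induction ps as [| y l IH]; simpl in *; [contradiction |].
    destruct Hz as [<- | Hz]; [apply Rmax_l |].
    eapply Rle_trans; [exact (IH Hz) | apply Rmax_r].
Qed.

Lemma support_attained u : exists z, In z (p0 :: ps) /\ support u = dot u z.
Proof.
  unfold support. induction ps as [| y l [z [Hz E]]]; simpl.
  - exists p0; auto.
  - apply Rmax_case.
    + exists y; simpl; auto.
    + exists z; destruct Hz as [<- | Hz]; simpl; auto.
Qed.

Lemma continuity_support (a b : R -> R) :
  continuity a -> continuity b -> continuity (fun t => support (a t, b t)).
Proof.
  intros Ha Hb.
  assert (Hdot : forall z, continuity (fun t => dot (a t, b t) z)).
  { intros z. unfold dot; simpl.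
    apply continuity_plus; apply continuity_mult; auto;
      apply continuity_const; intros ? ?; reflexivity. }
  unfold support. induction ps as [| y l IH]; simpl.
  - apply Hdot.
  - apply continuity_Rmax; auto.
Qed.

Definition proj_mid (u : point) : R := (support u - support (opp u)) / 2.

Lemma proj_mid_opp u : proj_mid (opp u) = - proj_mid u.
Proof. unfold proj_mid. rewrite opp_involutive. field. Qed.

Lemma continuity_proj_mid_dir f :
  continuity f -> continuity (fun t => proj_mid (dir (f t))).
Proof.
  intros Hf. unfold proj_mid, dir, opp; simpl.
  apply continuity_mult; [| apply continuity_const; intros ? ?; reflexivity].
  apply continuity_minus; apply continuity_support; reg.
Qed.

Lemma proj_mid_strip u z :
  (forall p q, In p (p0 :: ps) -> In q (p0 :: ps) -> dist2 p q <= 1) ->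
  fst u ^ 2 + snd u ^ 2 = 1 -> In z (p0 :: ps) ->
  Rabs (dot u z - proj_mid u) <= 1 / 2.
Proof.
  intros Hdiam Hu Hz.
  destruct (support_attained u) as [p [Hp Ep]].
  destruct (support_attained (opp u)) as [q [Hq Eq]].
  pose proof (support_ub u z Hz) as Hzu.
  pose proof (support_ub (opp u) z Hz) as Hzo.
  pose proof (dot_sub_le_dist u p q Hu) as Hpq.
  pose proof (Hdiam p q Hp Hq).
  rewrite dot_opp in Eq, Hzo.
  apply Rabs_le. unfold proj_mid. lra.
Qed.

Definition mid_sum (t : R) : R :=
  proj_mid (dir (t - 2 * (PI / 3))) + proj_mid (dir t) + proj_mid (dir (t + 2 * (PI / 3))).

Lemma mid_sum_shift t : mid_sum (t + PI / 3) = - mid_sum t.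
Proof.
  unfold mid_sum.
  replace (t + PI / 3 - 2 * (PI / 3)) with (t + 2 * (PI / 3) - PI) by field.
  replace (t + PI / 3 + 2 * (PI / 3)) with (t + PI) by field.
  replace (t + PI / 3) with (t - 2 * (PI / 3) + PI) by field.
  rewrite dir_sub_PI, !dir_add_PI, !proj_mid_opp. ring.
Qed.

Lemma exists_balanced_dir : exists t, mid_sum t = 0.
Proof.
  apply (IVT_opp_values mid_sum (PI / 3)).
  - unfold mid_sum. repeat apply continuity_plus; apply continuity_proj_mid_dir; reg.
  - pose proof PI_RGT_0; lra.
  - rewrite <- (Rplus_0_l (PI / 3)) at 1. apply mid_sum_shift.
Qed.

End Support.

Lemma dot_dir_add_2PI3 t z :
  dot (dir (t + 2 * (PI / 3))) z = - dot (dir t) z / 2 + sqrt 3 / 2 * dot (dir (t + PI / 2)) z.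
Proof.
  rewrite dir_add_PI2. unfold dot, dir; simpl.
  rewrite cos_plus, sin_plus, cos_2PI3, sin_2PI3. field.
Qed.

Lemma dot_dir_sub_2PI3 t z :
  dot (dir (t - 2 * (PI / 3))) z = - dot (dir t) z / 2 - sqrt 3 / 2 * dot (dir (t + PI / 2)) z.
Proof.
  rewrite dir_add_PI2. unfold dot, dir; simpl.
  rewrite cos_minus, sin_minus, cos_2PI3, sin_2PI3. field.
Qed.

Definition frame (t a b : R) : point := (a * cos t - b * sin t, a * sin t + b * cos t).

Lemma dist2_frame t a b z :
  dist2 (frame t a b) z
  = sqrt ((dot (dir t) z - a) ^ 2 + (dot (dir (t + PI / 2)) z - b) ^ 2).
Proof.
  rewrite dir_add_PI2. unfold dist2, frame, dot, dir; simpl. f_equal.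
  pose proof (sin2_cos2 t) as H. unfold Rsqr in H. nra.
Qed.

(* The half Y >= 0 of the hexagon is the pentagon with vertices (+-1/2, 0),
   (+-1/2, sqrt 3 / 6) and (0, sqrt 3 / 3).  All but the last are exactly at
   distance sqrt (13/48) from (0, sqrt 3 / 12), the last one is closer. *)
Lemma hexagon_half_in_disc X Y :
  Rabs X <= 1 / 2 -> Rabs (- X / 2 + sqrt 3 / 2 * Y) <= 1 / 2 ->
  Rabs (- X / 2 - sqrt 3 / 2 * Y) <= 1 / 2 -> 0 <= Y ->
  X ^ 2 + (Y - sqrt 3 / 12) ^ 2 <= 13 / 48.
Proof.
  intros H1%Rabs_le_between H2%Rabs_le_between H3%Rabs_le_between HY.
  assert (Q : sqrt 3 * sqrt 3 = 3) by (apply sqrt_sqrt; lra).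
  assert (E : 48 * (X ^ 2 + (Y - sqrt 3 / 12) ^ 2) - (48 * X ^ 2 + 16 * (sqrt 3 * Y - 1 / 4) ^ 2)
              = (sqrt 3 * sqrt 3 - 3) * (1 / 3 - 16 * Y ^ 2)) by field.
  rewrite Q in E.
  pose proof Rlt_sqrt3_0.
  set (W := sqrt 3 * Y) in *.
  assert (HW : 0 <= W) by (unfold W; nra).
  assert (H2' : - 1 <= - X + W <= 1) by (unfold W; lra).
  assert (H3' : - 1 <= - X - W <= 1) by (unfold W; lra).
  clearbody W.
  destruct (Rle_dec W (1 / 2)); nra.
Qed.

Lemma hexagon_in_two_discs X Y :
  Rabs X <= 1 / 2 -> Rabs (- X / 2 + sqrt 3 / 2 * Y) <= 1 / 2 ->
  Rabs (- X / 2 - sqrt 3 / 2 * Y) <= 1 / 2 ->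
  X ^ 2 + (Y - sqrt 3 / 12) ^ 2 <= 13 / 48 \/ X ^ 2 + (Y + sqrt 3 / 12) ^ 2 <= 13 / 48.
Proof.
  intros H1 H2 H3. destruct (Rle_dec 0 Y) as [HY | HY].
  - left. apply hexagon_half_in_disc; assumption.
  - right. replace ((Y + sqrt 3 / 12) ^ 2) with ((- Y - sqrt 3 / 12) ^ 2) by ring.
    apply hexagon_half_in_disc; [assumption | | | lra].
    + replace (- X / 2 + sqrt 3 / 2 * - Y) with (- X / 2 - sqrt 3 / 2 * Y) by ring.
      assumption.
    + replace (- X / 2 - sqrt 3 / 2 * - Y) with (- X / 2 + sqrt 3 / 2 * Y) by ring.
      assumption.
Qed.

(* [frame t s1 b] is the common point of the three mid-lines; it exists
   because s1 + s2 + s3 = 0. *)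
Lemma balanced_strips_in_two_discs t s1 s2 s3 b z :
  s1 + s2 + s3 = 0 -> sqrt 3 * b = s2 - s3 ->
  Rabs (dot (dir t) z - s1) <= 1 / 2 ->
  Rabs (dot (dir (t + 2 * (PI / 3))) z - s2) <= 1 / 2 ->
  Rabs (dot (dir (t - 2 * (PI / 3))) z - s3) <= 1 / 2 ->
  dist2 (frame t s1 (b + sqrt 3 / 12)) z <= sqrt (13 / 48) \/
  dist2 (frame t s1 (b - sqrt 3 / 12)) z <= sqrt (13 / 48).
Proof.
  intros Hs Hb H1 H2 H3.
  rewrite !dist2_frame.
  rewrite dot_dir_add_2PI3 in H2. rewrite dot_dir_sub_2PI3 in H3.
  set (X := dot (dir t) z - s1) in *.
  set (Y := dot (dir (t + PI / 2)) z - b).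
  replace (dot (dir (t + PI / 2)) z - (b + sqrt 3 / 12)) with (Y - sqrt 3 / 12) by (unfold Y; ring).
  replace (dot (dir (t + PI / 2)) z - (b - sqrt 3 / 12)) with (Y + sqrt 3 / 12) by (unfold Y; ring).
  destruct (hexagon_in_two_discs X Y) as [HD | HD].
  - assumption.
  - replace (- X / 2 + sqrt 3 / 2 * Y)
      with (- dot (dir t) z / 2 + sqrt 3 / 2 * dot (dir (t + PI / 2)) z - s2)
      by (unfold X, Y; lra).
    assumption.
  - replace (- X / 2 - sqrt 3 / 2 * Y)
      with (- dot (dir t) z / 2 - sqrt 3 / 2 * dot (dir (t + PI / 2)) z - s3)
      by (unfold X, Y; lra).
    assumption.
  - left. apply sqrt_le_1_alt. exact HD.
  - right. apply sqrt_le_1_alt. exact HD.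
Qed.

Definition in_discb (c : point) (r : R) (z : point) : bool :=
  if Rle_dec (dist2 c z) r then true else false.

Lemma disc_covers_filter c r P :
  NoDup P -> disc_covers_at_least c r P (length (filter (in_discb c r) P)).
Proof.
  intros HP. exists (filter (in_discb c r) P).
  split; [apply NoDup_filter; exact HP |]. split; [lia |].
  intros z [Hz E]%filter_In. split; [exact Hz |].
  unfold in_discb in E. destruct (Rle_dec (dist2 c z) r); [assumption | discriminate].
Qed.

Lemma disc_covers_at_least_le c r P k k' :
  (k' <= k)%nat -> disc_covers_at_least c r P k -> disc_covers_at_least c r P k'.
Proof. intros Hk [Q [HQ [HkQ HQP]]]. exists Q. split; [exact HQ |]. split; [lia | exact HQP]. Qed.

Lemma length_le_filter_or {A : Type} (f g : A -> bool) (l : list A) :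
  (forall z, In z l -> f z = true \/ g z = true) ->
  (length l <= length (filter f l) + length (filter g l))%nat.
Proof.
  induction l as [| a l IH]; simpl; intros H; [lia |].
  specialize (IH (fun z Hz => H z (or_intror Hz))).
  destruct (H a (or_introl eq_refl)) as [E | E]; rewrite E;
    [destruct (g a) | destruct (f a)]; simpl; lia.
Qed.

Lemma ceil_half_le_max n a b : (n <= a + b)%nat -> (ceil_half n <= Nat.max a b)%nat.
Proof.
  intros H. unfold ceil_half.
  pose proof (Nat.div_mod (n + 1) 2 ltac:(lia)).
  pose proof (Nat.mod_upper_bound (n + 1) 2 ltac:(lia)). lia.
Qed.

Lemma two_discs_cover_half c1 c2 r P :
  NoDup P -> (forall z, In z P -> dist2 c1 z <= r \/ dist2 c2 z <= r) ->
  exists c, disc_covers_at_least c r P (ceil_half (length P)).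
Proof.
  intros HP Hcov.
  assert (Hlen : (length P <= length (filter (in_discb c1 r) P)
                              + length (filter (in_discb c2 r) P))%nat).
  { apply length_le_filter_or. intros z Hz. unfold in_discb.
    destruct (Hcov z Hz); [left | right]; destruct Rle_dec; tauto. }
  apply ceil_half_le_max in Hlen.
  destruct (Nat.max_spec (length (filter (in_discb c1 r) P))
                         (length (filter (in_discb c2 r) P))) as [[_ E] | [_ E]];
    rewrite E in Hlen; [exists c2 | exists c1];
    eapply disc_covers_at_least_le; eauto using disc_covers_filter.
Qed.

Theorem lemma1 (n : nat) (r : R) :
  (1 <= n)%nat ->
  sqrt (13 / 48) <= r -> r < sqrt 3 / 3 ->
  N_admissible n r (ceil_half n).
Proof.
  intros Hn Hr _ P [[HP Hlen] Hdiam].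
  destruct P as [| p0 ps]; [simpl in Hlen; lia |].
  destruct (exists_balanced_dir p0 ps) as [t Ht].
  set (s1 := proj_mid p0 ps (dir t)).
  set (s2 := proj_mid p0 ps (dir (t + 2 * (PI / 3)))).
  set (s3 := proj_mid p0 ps (dir (t - 2 * (PI / 3)))).
  set (b := (s2 - s3) / sqrt 3).
  rewrite <- Hlen.
  apply (two_discs_cover_half (frame t s1 (b + sqrt 3 / 12)) (frame t s1 (b - sqrt 3 / 12)));
    [exact HP |].
  intros z Hz.
  destruct (balanced_strips_in_two_discs t s1 s2 s3 b z) as [Hd | Hd];
    try (apply proj_mid_strip; auto using dir_unit).
  - unfold mid_sum in Ht. unfold s1, s2, s3. lra.
  - unfold b. field. apply Rgt_not_eq, Rlt_sqrt3_0.
  - left. lra.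
  - right. lra.
Qed.
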